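(* Let $m\in(1,2]$ and $U\in C^3(\mathbb{R}^d)$ such that there exists $A_1\ge0$ with $\|D^kU(q)\|\le A_1(\|q\|+1)^{m-k}$ for all $q$ and $k=2,3$. Let $T\in\mathbb{N}^*$ and $\gamma\in(0,m-1)$. (a) If $m\in(1,2)$ and $h_0>0$, there exist $\kappa>0$ and $R\ge0$ such that for all $h\in(0,h_0]$, all $q_0,p_0\in\mathbb{R}^d$ with $\|p_0\|\le\|q_0\|^\gamma$ and $\|q_0\|\ge R$, and all $i,j,k\in\{1,\dots,T\}$, $$\|\Phi^{q,i}_h(q_0,p_0)-\Phi^{q,j}_h(q_0,p_0)\|\le\kappa h\|\Phi^{q,k}_h(q_0,p_0)\|^{m-1}.$$ (b) If $m=2$, there exist $h_0>0$, $\kappa>0$ and $R\ge0$ such that the same inequality holds for all $h\in(0,h_0]$, all $q_0,p_0$ with $\|p_0\|\le\|q_0\|^\gamma$ and $\|q_0\|\ge R$, and all $i,j,k\in\{1,\dots,T\}$.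
   Context: $D^kU$ is the $k$-th differential with operator norm. For $h>0$ the leapfrog map is $\Phi_h=\Psi^{(1)}_h\circ\Psi^{(2)}_h\circ\Psi^{(1)}_h$ with $\Psi^{(1)}_h(q,p)=(q,p-(h/2)\nabla U(q))$ and $\Psi^{(2)}_h(q,p)=(q+hp,p)$; $\Phi^{\circ \ell}_h$ is its $\ell$-fold composition and $\Phi^{q,\ell}_h$ the position (first $d$ coordinates) component of $\Phi^{\circ\ell}_h$. *)

From HB Require Import structures.
From mathcomp Require Import all_boot all_order all_algebra.
From mathcomp Require Import all_classical all_reals all_analysis.
Set Implicit Arguments. Unset Strict Implicit. Unset Printing Implicit Defensive.
Import Order.TTheory GRing.Theory Num.Theory.
Import numFieldNormedType.Exports.
Local Open Scope ring_scope.

Section Defs.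
Variables (R : realType) (d : nat).
Local Notation V := 'rV[R]_d.

Definition enorm (v : V) : R := Num.sqrt (\sum_(i < d) v ord0 i ^+ 2).

Definition evec (i : 'I_d) : V := delta_mx ord0 i.

Definition partial (i : 'I_d) (f : V -> R) : V -> R := fun q => derive f q (evec i).

Definition C3 (U : V -> R) : Prop :=
  continuous U /\
  (forall i, (forall q, derivable U q (evec i)) /\ continuous (partial i U)) /\
  (forall i j, (forall q, derivable (partial i U) q (evec j)) /\
               continuous (partial j (partial i U))) /\
  (forall i j k, (forall q, derivable (partial j (partial i U)) q (evec k)) /\
               continuous (partial k (partial j (partial i U)))).

Definition D2 (U : V -> R) (q u v : V) : R := derive ('D_v U) q u.
Definition D3 (U : V -> R) (q u v w : V) : R := derive ('D_v ('D_w U)) q u.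

Definition opnorm2_le (U : V -> R) (q : V) (A : R) : Prop :=
  forall u v, enorm u <= 1 -> enorm v <= 1 -> `|D2 U q u v| <= A.
Definition opnorm3_le (U : V -> R) (q : V) (A : R) : Prop :=
  forall u v w, enorm u <= 1 -> enorm v <= 1 -> enorm w <= 1 ->
    `|D3 U q u v w| <= A.

Definition grad (U : V -> R) (q : V) : V := \row_i partial i U q.

Definition Psi1 (U : V -> R) (h : R) (x : V * V) : V * V :=
  (x.1, x.2 - (h / 2) *: grad U x.1).
Definition Psi2 (h : R) (x : V * V) : V * V := (x.1 + h *: x.2, x.2).
Definition Phi (U : V -> R) (h : R) (x : V * V) : V * V :=
  Psi1 U h (Psi2 h (Psi1 U h x)).
Definition Phiq (U : V -> R) (h : R) (l : nat) (x : V * V) : V :=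
  (iter l (Phi U h) x).1.

End Defs.

(* Write a := m - 1, so 0 < a <= 1.  Integrating the bound on D^2 U along the
   coordinate axes, one axis at a time (C^3 only provides partial derivatives),
   gives the sublinear gradient bound |grad U q| <= B (|q| + 1)^a.  Let
   X := |q0| >= 1 and Y := X^a.  On the ball of radius X around q0 the gradient
   is at most 3 B Y, so while the positions stay in that ball the momenta stay
   O(Y) (recall |p0| <= X^gamma <= Y) and after at most T steps the positions
   are within c h Y of q0.  When c h Y is small compared with X (for large X if
   a < 1, for small h if a = 1) they indeed never leave the ball; then every
   difference Phi^i - Phi^j is O(h Y) and |Phi^k| is comparable to X, so that
   Y = O(|Phi^k|^a).  The estimates are carried out in the max norm of
   'rV[R]_d, which is within a factor d of the Euclidean norm enorm. *)

From HB Require Import structures.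
From mathcomp Require Import all_boot all_order all_algebra.
From mathcomp Require Import all_classical all_reals all_analysis.
From mathcomp Require Import ring lra.
Import Order.TTheory GRing.Theory Num.Theory.
Import numFieldNormedType.Exports.
Set Implicit Arguments. Unset Strict Implicit. Unset Printing Implicit Defensive.
Local Open Scope ring_scope.
Local Open Scope classical_set_scope.

Section derive_oppv.
Variables (R : realType) (V W : normedModType R).

Lemma oppr_dnbhs0 : (-%R : R -> R) @ 0^' `=>` 0^'.
Proof.
move=> A [e /= e0 eA]; exists e => //= y /= ye y0.
apply: eA; last by rewrite oppr_eq0.
by move: ye; rewrite /ball /= !sub0r opprK normrN.
Qed.

Lemma cvg_derive_oppv (f : V -> W) x v : derivable f x v ->
  (fun h : R => h^-1 *: ((f \o shift x) (h *: - v) - f x)) @ 0^' --> - 'D_v f x.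
Proof.
move=> df.
pose g h : W := h^-1 *: ((f \o shift x) (h *: v) - f x).
have -> : (fun h : R => h^-1 *: ((f \o shift x) (h *: - v) - f x)) =
    (fun h => - g (- h)).
  by apply/funext => h; rewrite /g invrN scaleNr scalerN -scaleNr opprK.
exact: cvgN (cvg_comp _ _ oppr_dnbhs0 df).
Qed.

Lemma derivable_oppv (f : V -> W) x v : derivable f x v -> derivable f x (- v).
Proof. by move=> df; apply/cvg_ex; exists (- 'D_v f x); exact: cvg_derive_oppv. Qed.

Lemma derive_oppv (f : V -> W) x v : derivable f x v -> 'D_(- v) f x = - 'D_v f x.
Proof. by move=> df; apply: cvg_lim => //; exact: cvg_derive_oppv. Qed.

End derive_oppv.

Section derive_along_line.
Variables (R : realType) (V : normedModType R).

Lemma derive_line_quotient (f : V -> R) x e t :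
  (fun h : R => h^-1 *: (((fun s : R => f (x + s *: e)) \o shift t) (h *: 1)
                          - f (x + t *: e)))
  = (fun h : R => h^-1 *: ((f \o shift (x + t *: e)) (h *: e) - f (x + t *: e))).
Proof.
by apply/funext => h /=; rewrite /shift /= scaler1 scalerDl addrCA.
Qed.

Lemma derivable_line (f : V -> R) x e t :
  derivable f (x + t *: e) e -> derivable (fun s : R => f (x + s *: e)) t 1.
Proof. by rewrite /derivable derive_line_quotient. Qed.

Lemma derive1_line (f : V -> R) x e t :
  (fun s : R => f (x + s *: e))^`() t = 'D_e f (x + t *: e).
Proof. by rewrite derive1E /derive derive_line_quotient. Qed.

End derive_along_line.

Lemma mean_value_inequality (R : realType) (g F : R -> R) (a b : R) : a <= b ->
  (forall t, t \in `[a, b]%R -> derivable g t 1) ->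
  (forall t, t \in `[a, b]%R -> derivable F t 1) ->
  (forall t, t \in `]a, b[%R -> `|g^`() t| <= F^`() t) ->
  `|g b - g a| <= F b - F a.
Proof.
move=> ab dg dF dgF.
have aab : a \in `[a, b]%R by rewrite in_itv /= lexx ab.
have bab : b \in `[a, b]%R by rewrite in_itv /= lexx ab.
have oc t : t \in `]a, b[%R -> t \in `[a, b]%R.
  by rewrite !in_itv /= => /andP[/ltW -> /ltW ->].
have nondecr (G : R -> R) : (forall t, t \in `[a, b]%R -> derivable G t 1) ->
    (forall t, t \in `]a, b[%R -> 0 <= G^`() t) -> G a <= G b.
  move=> dG G'0; apply: (ger0_derive1_le_cc (fun t => dG t \o oc t)) => //.
  exact: derivable_within_continuous.
have FBg : F a - g a <= F b - g b.
  apply: (nondecr (F - g)) => [t /[dup] /dF ? /dg ?|t /[dup] tab /oc /[dup] /dF ? /dg ?].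
    exact: derivableB.
  rewrite derive1E deriveB // -!derive1E subr_ge0.
  exact: le_trans (ler_norm _) (dgF _ tab).
have FDg : F a + g a <= F b + g b.
  apply: (nondecr (F + g)) => [t /[dup] /dF ? /dg ?|t /[dup] tab /oc /[dup] /dF ? /dg ?].
    exact: derivableD.
  rewrite derive1E deriveD // -!derive1E.
  by have := dgF t tab; rewrite ler_norml => /andP[]; lra.
by rewrite ler_norml; apply/andP; split; lra.
Qed.

Section growth_along_ray.
Variables (R : realType) (V : normedModType R).

Lemma is_derive_powR_shift1 (a t : R) : 0 <= t ->
  is_derive t 1 ((@powR R ^~ a) \o shift 1) (a * (t + 1) `^ (a - 1)).
Proof.
move=> t0; rewrite -[X in is_derive _ _ _ X]mulr1.
apply: is_derive1_comp; last exact: is_derive_shift.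
apply: is_derive1_powR; rewrite /shift /=; lra.
Qed.

Lemma growth_along_ray (f : V -> R) y e (s A a : R) : 0 <= s -> 0 < a ->
  (forall t, 0 <= t <= s -> derivable f (y + t *: e) e) ->
  (forall t, 0 <= t <= s -> `|'D_e f (y + t *: e)| <= A * (t + 1) `^ (a - 1)) ->
  `|f (y + s *: e) - f y| <= A / a * ((s + 1) `^ a - 1).
Proof.
move=> s0 a0 df dfA.
pose F := (A / a) \*: ((@powR R ^~ a) \o shift 1).
have dF (t : R) : 0 <= t -> is_derive t 1 F (A * (t + 1) `^ (a - 1)).
  move=> t0; apply: is_derive_eq; first exact/is_deriveZ/is_derive_powR_shift1.
  by rewrite /GRing.scale /= mulrA divfK ?gt_eqF.
have -> : A / a * ((s + 1) `^ a - 1) = F s - F 0.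
  by rewrite /F /= /shift /= add0r powR1 -[_%:A]/(_ * 1) mulrBr mulr1.
have := @mean_value_inequality R (fun t => f (y + t *: e)) F 0 s s0.
rewrite scale0r addr0; apply.
- by move=> t; rewrite in_itv /= => /df /derivable_line.
- by move=> t; rewrite in_itv /= => /andP[t0 _]; have [] := dF t t0.
move=> t; rewrite in_itv /= => /andP[t0 ts]; rewrite [F^`() t]derive1E.
have [_ ->] := dF t (ltW t0).
rewrite derive1_line; apply: dfA; rewrite !ltW //.
Qed.

End growth_along_ray.

Section rV_norms.
Variables (R : realType) (d : nat).
Implicit Types (v : 'rV[R]_d) (c : R).

Lemma coord_le_norm v j : `|v ord0 j| <= `|v|.
Proof.
rewrite [leRHS]/Num.Def.normr /= mx_normrE.
by apply/bigmax_geP; right; exists (ord0, j).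
Qed.

Lemma norm_rV_le v c : 0 <= c -> (forall j, `|v ord0 j| <= c) -> `|v| <= c.
Proof.
move=> c0 vc; rewrite [leLHS]/Num.Def.normr /= mx_normrE.
by apply: bigmax_le => // -[i j] _; rewrite ord1.
Qed.

Lemma coord_le_enorm v j : `|v ord0 j| <= enorm v.
Proof.
rewrite /enorm -sqrtr_sqr; apply: ler_wsqrtr.
by rewrite (bigD1 j) //= lerDl sumr_ge0 // => k _; rewrite sqr_ge0.
Qed.

Lemma norm_le_enorm v : `|v| <= enorm v.
Proof. exact/norm_rV_le/coord_le_enorm/sqrtr_ge0. Qed.

Lemma enorm_le_norm v : enorm v <= d%:R * `|v|.
Proof.
have vd : 0 <= d%:R * `|v| by rewrite mulr_ge0.
rewrite /enorm -(ger0_norm vd) -sqrtr_sqr; apply: ler_wsqrtr.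
apply: (@le_trans _ _ (\sum_(j < d) `|v| ^+ 2)).
  apply: ler_sum => j _; rewrite -real_normK ?num_real //.
  by rewrite lerXn2r ?nnegrE ?coord_le_norm.
rewrite sumr_const card_ord exprMn -natrX mulr_natl ler_wpMn2l ?sqr_ge0 //.
by have [->|d0] := posnP d; rewrite // leq_pmulr.
Qed.

Lemma enorm_evec (i : 'I_d) : enorm (evec R i) = 1.
Proof.
rewrite /enorm (bigD1 i) //= big1 => [|j ji]; last by rewrite mxE (negbTE ji) andbF expr0n.
by rewrite addr0 mxE !eqxx expr1n sqrtr1.
Qed.

End rV_norms.

Lemma le0_ger_powR (R : realType) (r x y : R) :
  r <= 0 -> 0 < x -> x <= y -> y `^ r <= x `^ r.
Proof.
move=> r0 x0 xy; have y0 : 0 < y by exact: lt_le_trans xy.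
rewrite -[r]opprK !(powRN _ (- r)) lef_pV2 ?posrE ?powR_gt0 //.
by apply: ge0_ler_powR; rewrite ?oppr_ge0 ?nnegrE // ltW.
Qed.

Section coordinate_path.
Variables (R : realType) (d : nat).
Implicit Types (q y z e : 'rV[R]_d) (f : 'rV[R]_d -> R) (s : R).

Definition coord_path q (k : nat) : 'rV[R]_d :=
  \row_l (if (l < k)%N then q ord0 l else 0).

Lemma coord_path0 q : coord_path q 0 = 0.
Proof. by apply/rowP => l; rewrite !mxE. Qed.

Lemma coord_path_full q : coord_path q d = q.
Proof. by apply/rowP => l; rewrite mxE ltn_ord. Qed.

Lemma coord_path_ord q (i : 'I_d) : coord_path q i ord0 i = 0.
Proof. by rewrite mxE ltnn. Qed.

Lemma coord_pathS q (i : 'I_d) :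
  coord_path q i.+1 = coord_path q i + q ord0 i *: evec R i.
Proof.
apply/rowP => l; rewrite !mxE ltnS.
have -> : (l == i) = (l == i :> nat) by [].
by case: ltngtP => [_|_|/val_inj ->]; rewrite ?mulr0 ?addr0 ?mulr1 ?add0r.
Qed.

Variables (A a : R).
Hypotheses (a_gt0 : 0 < a) (a_le1 : a <= 1) (A_ge0 : 0 <= A).

Lemma growth_along_axis f y j e s : 0 <= s ->
  y ord0 j = 0 -> `|e ord0 j| = 1 ->
  (forall z, derivable f z e) ->
  (forall z, `|'D_e f z| <= A * (`|z| + 1) `^ (a - 1)) ->
  `|f (y + s *: e) - f y| <= A / a * ((s + 1) `^ a - 1).
Proof.
move=> s0 yj ej df dfA; apply: growth_along_ray => // t /andP[t0 _].
apply: le_trans (dfA _) _; rewrite ler_wpM2l // le0_ger_powR ?subr_le0 //.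
  by rewrite ltr_wpDl.
rewrite lerD2r; apply: le_trans (coord_le_norm _ j).
by rewrite !mxE yj add0r normrM ej mulr1 ger0_norm.
Qed.

Lemma growth_along_coordinate f y j c : y ord0 j = 0 ->
  (forall z, derivable f z (evec R j)) ->
  (forall z, `|'D_(evec R j) f z| <= A * (`|z| + 1) `^ (a - 1)) ->
  `|f (y + c *: evec R j) - f y| <= A / a * ((`|c| + 1) `^ a - 1).
Proof.
move=> yj df dfA; have ej : `|evec R j ord0 j| = 1 by rewrite mxE !eqxx normr1.
have [c0|c0] := leP 0 c; first by rewrite (ger0_norm c0); apply: (@growth_along_axis _ _ j).
have -> : c *: evec R j = - c *: - evec R j by rewrite scalerN scaleNr opprK.
rewrite (ltr0_norm c0); apply: (@growth_along_axis _ _ j) => //; first lra.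
- by rewrite mxE normrN.
- by move=> z; exact: derivable_oppv.
- by move=> z; rewrite derive_oppv // normrN.
Qed.

Lemma growth_from_origin f q :
  (forall j z, derivable f z (evec R j)) ->
  (forall j z, `|'D_(evec R j) f z| <= A * (`|z| + 1) `^ (a - 1)) ->
  `|f q - f 0| <= d%:R * (A / a * ((`|q| + 1) `^ a - 1)).
Proof.
move=> df dfA.
have step (i : 'I_d) : `|f (coord_path q i.+1) - f (coord_path q i)|
    <= A / a * ((`|q| + 1) `^ a - 1).
  rewrite coord_pathS.
  apply: le_trans (growth_along_coordinate _ (coord_path_ord q i) (df i) (dfA i)) _.
  rewrite ler_wpM2l ?divr_ge0 ?(ltW a_gt0) // lerB // ge0_ler_powR ?nnegrE //.
  - exact: ltW.
  - by rewrite lerD2r coord_le_norm.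
have -> : f q - f 0 = f (coord_path q d) - f (coord_path q 0).
  by rewrite coord_path_full coord_path0.
rewrite -(@telescope_sumr _ 0 d (fun k => f (coord_path q k))) // big_mkord.
apply: le_trans (ler_norm_sum _ _ _) _; apply: le_trans (ler_sum _ (fun i _ => step i)) _.
by rewrite sumr_const card_ord mulr_natl.
Qed.

Lemma grad_growth U :
  (forall i j z, derivable (partial i U) z (evec R j)) ->
  (forall i j z, `|'D_(evec R j) (partial i U) z| <= A * (`|z| + 1) `^ (a - 1)) ->
  forall q, `|grad U q| <= (`|grad U 0| + d%:R * (A / a)) * (`|q| + 1) `^ a.
Proof.
move=> dU dUA q; have Aa : 0 <= A / a by rewrite divr_ge0 // ltW.
have q1 : 1 <= (`|q| + 1) `^ a.
  by rewrite -[leLHS](powRr0 (`|q| + 1)) ler_powR ?lerDr // ltW.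
apply: norm_rV_le => [|j]; first by rewrite mulr_ge0 ?powR_ge0 // addr_ge0 // mulr_ge0.
rewrite mxE -[partial j U q](subrK (partial j U 0)).
apply: le_trans (ler_normD _ _) _; rewrite addrC mulrDl lerD //.
  have := coord_le_norm (grad U 0) j; rewrite mxE => /le_trans; apply.
  by rewrite ler_peMr.
apply: le_trans (growth_from_origin q (dU j) (dUA j)) _.
by rewrite mulrA ler_wpM2l ?mulr_ge0 ?invr_ge0 ?(ltW a_gt0) // lerBlDr lerDl.
Qed.

End coordinate_path.

Lemma grad_growth_C3 (R : realType) (d : nat) (U : 'rV[R]_d -> R) (A a : R) :
  0 < a -> a <= 1 -> 0 <= A -> C3 U ->
  (forall q, opnorm2_le U q (A * (enorm q + 1) `^ (a - 1))) ->
  exists2 B, 0 <= B & forall q, `|grad U q| <= B * (`|q| + 1) `^ a.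
Proof.
move=> a_gt0 a_le1 A0 [_ [_ [dU _]]] D2U.
have dUA i j z : `|'D_(evec R j) (partial i U) z| <= A * (`|z| + 1) `^ (a - 1).
  have := D2U z (evec R j) (evec R i); rewrite !enorm_evec => /(_ (lexx _) (lexx _)).
  move/le_trans; apply; rewrite ler_wpM2l // le0_ger_powR ?subr_le0 //.
  by rewrite lerD2r norm_le_enorm.
exists (`|grad U 0| + d%:R * (A / a)); last exact: grad_growth (fun i j => (dU i j).1) dUA.
by rewrite addr_ge0 // mulr_ge0 // divr_ge0 // ltW.
Qed.

Section leapfrog_drift.
Variables (R : realType) (d : nat) (U : 'rV[R]_d -> R) (h : R).
Hypothesis h_ge0 : 0 <= h.

Lemma PhiE (x : 'rV[R]_d * 'rV[R]_d) :
  let p := x.2 - (h / 2) *: grad U x.1 in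
  Phi U h x = (x.1 + h *: p, p - (h / 2) *: grad U (x.1 + h *: p)).
Proof. by []. Qed.

Lemma norm_half_kick (p g : 'rV[R]_d) G : `|g| <= G ->
  `|p - (h / 2) *: g| <= `|p| + h / 2 * G.
Proof.
move=> gG; apply: le_trans (ler_normB _ _) _.
by rewrite normrZ ger0_norm ?divr_ge0 // lerD2l ler_wpM2l ?divr_ge0.
Qed.

Lemma leapfrog_drift (q0 p0 : 'rV[R]_d) (P0 G X : R) (N : nat) :
  0 <= G -> `|p0| <= P0 ->
  (forall q, `|q - q0| <= X -> `|grad U q| <= G) ->
  N%:R * h * (P0 + N%:R * h * G) <= X ->
  forall n, (n <= N)%N ->
    `|(iter n (Phi U h) (q0, p0)).1 - q0| <= n%:R * h * (P0 + N%:R * h * G) /\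
    `|(iter n (Phi U h) (q0, p0)).2| <= P0 + n%:R * h * G.
Proof.
move=> G0 p0P0 gradG NX; set M := P0 + N%:R * h * G.
have hG : 0 <= h * G by rewrite mulr_ge0.
have hG2 : h / 2 * G <= h * G.
  by apply: ler_wpM2r => //; rewrite ler_pdivrMr // ler_peMr // ler1n.
have M0 : 0 <= M.
  by rewrite addr_ge0 ?(le_trans _ p0P0) // -mulrA mulr_ge0.
have nX n : (n <= N)%N -> n%:R * h * M <= X.
  by move=> nN; apply: le_trans NX; rewrite ler_wpM2r // ler_wpM2r // ler_nat.
elim=> [_|n IH nN]; first by rewrite /= subrr normr0 !mul0r addr0.
have [qn_q0 pn] := IH (ltnW nN).
rewrite iterS PhiE /=.
set x := iter n (Phi U h) (q0, p0) in qn_q0 pn *.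
set p := x.2 - (h / 2) *: grad U x.1.
have gn : `|grad U x.1| <= G by apply/gradG/(le_trans qn_q0)/nX/ltnW.
have pM : `|p| <= M.
  apply: le_trans (norm_half_kick _ gn) _.
  have : n.+1%:R * h * G <= N%:R * h * G.
    by rewrite ler_wpM2r // ler_wpM2r // ler_nat.
  rewrite /M -natr1 !mulrDl mul1r; lra.
have qn1 : `|x.1 + h *: p - q0| <= n.+1%:R * h * M.
  rewrite addrAC; apply: le_trans (ler_normD _ _) _.
  rewrite normrZ ger0_norm // -natr1 !mulrDl mul1r lerD //.
  exact: ler_wpM2l.
split => //; apply: le_trans (norm_half_kick _ _) _.
  exact/gradG/(le_trans qn1)/nX.
apply: le_trans (lerD (norm_half_kick _ gn) (lexx _)) _.
rewrite -addrA -mulrDl -splitr -natr1 !mulrDl mul1r; lra.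
Qed.

End leapfrog_drift.

Section sublinear_powers.
Variables (R : realType) (a : R).
Hypotheses (a_gt0 : 0 < a) (a_le1 : a <= 1).

Lemma ler_powR_scale (c x y : R) : 1 <= c -> 0 <= x -> x <= c * y ->
  x `^ a <= c * y `^ a.
Proof.
move=> c1 x0 xcy; have y0 : 0 <= y by rewrite -(pmulr_rge0 _ (lt_le_trans ltr01 c1)) (le_trans x0).
apply: (@le_trans _ _ ((c * y) `^ a)).
  by rewrite ge0_ler_powR ?nnegrE ?(ltW a_gt0) ?(le_trans x0).
by rewrite powRM ?(le_trans ler01 c1) // ler_wpM2r ?powR_ge0 ?ler1_powR.
Qed.

Lemma powR_absorb (K x : R) : a < 1 -> 0 <= K -> K `^ (1 - a)^-1 <= x ->
  K * x `^ a <= x.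
Proof.
move=> a1 K0 Kx; have x0 : 0 <= x := le_trans (powR_ge0 _ _) Kx.
have a1' : 0 < 1 - a by rewrite subr_gt0.
have xE : x = x `^ (1 - a) * x `^ a by rewrite -powRD subrK ?powRr1 ?oner_eq0.
rewrite {2}xE ler_wpM2r ?powR_ge0 //.
have -> : K = (K `^ (1 - a)^-1) `^ (1 - a) by rewrite -powRrM mulVf ?powRr1 ?gt_eqF.
by rewrite ge0_ler_powR ?nnegrE ?powR_ge0 // ltW.
Qed.

End sublinear_powers.

Section leapfrog_increments.
Variables (R : realType) (d : nat) (U : 'rV[R]_d -> R) (a B : R).
Hypotheses (a_gt0 : 0 < a) (a_le1 : a <= 1) (B_ge0 : 0 <= B).
Hypothesis grad_le : forall q, `|grad U q| <= B * (`|q| + 1) `^ a.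

Lemma grad_le_near (q0 q : 'rV[R]_d) : 1 <= enorm q0 -> `|q - q0| <= enorm q0 ->
  `|grad U q| <= 3 * B * enorm q0 `^ a.
Proof.
move=> q01 qq0; apply: le_trans (grad_le q) _; rewrite -mulrA mulrCA ler_wpM2l //.
apply: ler_powR_scale => //; first lra.
have := norm_le_enorm q0; have := ler_normD (q - q0) q0; rewrite subrK; lra.
Qed.

Definition drift_const (T : nat) (H : R) := T%:R * (1 + T%:R * H * (3 * B)).

Lemma drift_const_ge0 T H : 0 <= H -> 0 <= drift_const T H.
Proof. by move=> H0; rewrite mulr_ge0 // addr_ge0 // !mulr_ge0. Qed.

Lemma leapfrog_displacement (T : nat) (H h gam : R) (q0 p0 : 'rV[R]_d) :
  0 < h <= H -> gam <= a -> 1 <= enorm q0 -> enorm p0 <= enorm q0 `^ gam ->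
  drift_const T H * h * enorm q0 `^ a <= enorm q0 ->
  forall n, (n <= T)%N ->
  `|Phiq U h n (q0, p0) - q0| <= drift_const T H * h * enorm q0 `^ a.
Proof.
move=> /andP[h0 hH] ga q01 p0q0 small n nT.
set X := enorm q0 in q01 p0q0 small *; set Y := X `^ a in small *.
set c := drift_const T H in small *.
have Y0 : 0 <= Y := powR_ge0 _ _.
have p0Y : `|p0| <= Y.
  apply: le_trans (norm_le_enorm _) (le_trans p0q0 _); exact: ler_powR.
have G0 : 0 <= 3 * B * Y by rewrite !mulr_ge0.
set M := Y + T%:R * h * (3 * B * Y).
have M0 : 0 <= M by rewrite addr_ge0 // !mulr_ge0 // ltW.
have TM : T%:R * h * M <= c * h * Y.
  have : 0 <= T%:R * T%:R * (3 * B) * h * Y * (H - h).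
    by rewrite !mulr_ge0 ?subr_ge0 // ltW.
  rewrite /M /c /drift_const; nra.
apply: (@le_trans _ _ (n%:R * h * M)).
  have TX := le_trans TM small.
  by have [] := leapfrog_drift (ltW h0) G0 p0Y (fun q => grad_le_near q01) TX nT.
by apply: le_trans TM; rewrite ler_wpM2r // ler_wpM2r ?ler_nat // ltW.
Qed.

Lemma leapfrog_increments (T : nat) (H h gam : R) (q0 p0 : 'rV[R]_d) :
  0 < h <= H -> gam <= a -> 1 <= enorm q0 -> enorm p0 <= enorm q0 `^ gam ->
  2 * d%:R * drift_const T H * h * enorm q0 `^ a <= enorm q0 ->
  forall i j k, (i <= T)%N -> (j <= T)%N -> (k <= T)%N ->
  enorm (Phiq U h i (q0, p0) - Phiq U h j (q0, p0)) <=
    4 * d%:R ^+ 2 * drift_const T H * h * enorm (Phiq U h k (q0, p0)) `^ a.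
Proof.
move=> /andP[h0 hH] ga q01 p0q0 small i j k iT jT kT.
set X := enorm q0 in q01 p0q0 small *; set Y := X `^ a in small *.
set c := drift_const T H in small *.
have d1 : 1 <= d%:R :> R.
  move: (le_trans q01 (enorm_le_norm q0)); move: `|q0| => x.
  by case: (posnP d) => [->|]; rewrite ?mul0r ?ler1n // ler10.
have c0 : 0 <= c by apply/drift_const_ge0/ltW/(lt_le_trans h0).
have chY : 0 <= c * h * Y by rewrite mulr_ge0 ?powR_ge0 // mulr_ge0 // (ltW h0).
have drift n : (n <= T)%N -> `|Phiq U h n (q0, p0) - q0| <= c * h * Y.
  apply: (leapfrog_displacement _ ga q01 p0q0); first by rewrite h0.
  by apply: le_trans small; rewrite -/c -/X -/Y; nra.
set qk := Phiq U h k (q0, p0); set E := enorm qk.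
have XE : X <= 2 * d%:R * E.
  have := enorm_le_norm q0.
  have : `|q0| <= E + c * h * Y.
    rewrite -(subKr qk q0); apply: le_trans (ler_normB _ _) _.
    by rewrite lerD ?norm_le_enorm ?drift.
  move/(ler_wpM2l (ler0n _ d)); rewrite -/X; lra.
have YE : Y <= 2 * d%:R * E `^ a.
  by apply: ler_powR_scale => //; [lra | exact: le_trans q01].
have qij : enorm (Phiq U h i (q0, p0) - Phiq U h j (q0, p0)) <= d%:R * (2 * (c * h * Y)).
  apply: le_trans (enorm_le_norm _) _; rewrite ler_wpM2l // mulr_natl mulr2n.
  have -> : Phiq U h i (q0, p0) - Phiq U h j (q0, p0) =
            (Phiq U h i (q0, p0) - q0) - (Phiq U h j (q0, p0) - q0).
    by rewrite opprB addrA subrK.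
  by apply: le_trans (ler_normB _ _) _; rewrite lerD ?drift.
apply: le_trans qij _.
rewrite (_ : 4 * _ * c * h * _ = d%:R * (2 * (c * h * (2 * d%:R * E `^ a)))); last by ring.
by rewrite ler_wpM2l // ler_wpM2l // ler_wpM2l // mulr_ge0 // ltW.
Qed.

Lemma leapfrog_increments_sublinear (T : nat) (gam h0 : R) :
  a < 1 -> gam <= a -> 0 < h0 ->
  exists kappa R0 : R, 0 < kappa /\ 0 <= R0 /\
    forall h : R, 0 < h <= h0 ->
    forall q0 p0 : 'rV[R]_d,
      enorm p0 <= enorm q0 `^ gam -> R0 <= enorm q0 ->
      forall i j k : nat, (1 <= i <= T)%N -> (1 <= j <= T)%N -> (1 <= k <= T)%N ->
        enorm (Phiq U h i (q0, p0) - Phiq U h j (q0, p0))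
          <= kappa * h * enorm (Phiq U h k (q0, p0)) `^ a.
Proof.
move=> a_lt1 ga h0_gt0; set c := drift_const T h0.
have c0 : 0 <= c by apply/drift_const_ge0/ltW.
have K0 : 0 <= 2 * d%:R * c * h0 by rewrite mulr_ge0 ?(ltW h0_gt0) // mulr_ge0.
exists (4 * d%:R ^+ 2 * c + 1), (Num.max 1 ((2 * d%:R * c * h0) `^ (1 - a)^-1)).
split; first by rewrite ltr_wpDl // mulr_ge0 // mulr_ge0 // exprn_ge0.
split; first by rewrite le_max ler01.
move=> h /andP[h_gt0 hh0] q0 p0 p0q0; rewrite ge_max => /andP[q01 Kq0].
move=> i j k /andP[_ iT] /andP[_ jT] /andP[_ kT].
apply: le_trans (leapfrog_increments (H := h0) _ ga q01 p0q0 _ iT jT kT) _.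
- by rewrite h_gt0.
- apply: le_trans _ (powR_absorb a_lt1 K0 Kq0).
  by rewrite ler_wpM2r ?powR_ge0 // ler_wpM2l // mulr_ge0.
by rewrite ler_wpM2r ?powR_ge0 // ler_wpM2r ?(ltW h_gt0) // lerDl.
Qed.

Lemma leapfrog_increments_linear (T : nat) (gam : R) :
  a = 1 -> gam <= a ->
  exists h0 kappa R0 : R, 0 < h0 /\ 0 < kappa /\ 0 <= R0 /\
    forall h : R, 0 < h <= h0 ->
    forall q0 p0 : 'rV[R]_d,
      enorm p0 <= enorm q0 `^ gam -> R0 <= enorm q0 ->
      forall i j k : nat, (1 <= i <= T)%N -> (1 <= j <= T)%N -> (1 <= k <= T)%N ->
        enorm (Phiq U h i (q0, p0) - Phiq U h j (q0, p0))
          <= kappa * h * enorm (Phiq U h k (q0, p0)) `^ a.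
Proof.
(* The constant is computed for step sizes up to 1, which covers h0 <= 1. *)
move=> a1 ga; set c := drift_const T 1.
have c0 : 0 <= c by apply: drift_const_ge0.
have dc0 : 0 <= 2 * d%:R * c by rewrite mulr_ge0 // mulr_ge0.
have hpos : 0 < 2 * d%:R * c + 1 by rewrite ltr_wpDl.
exists (2 * d%:R * c + 1)^-1, (4 * d%:R ^+ 2 * c + 1), 1.
split; first by rewrite invr_gt0.
split; first by rewrite ltr_wpDl // mulr_ge0 // mulr_ge0 // exprn_ge0.
split => // h /andP[h_gt0 hh0] q0 p0 p0q0 q01.
move=> i j k /andP[_ iT] /andP[_ jT] /andP[_ kT].
have h1 : h <= 1 by apply: le_trans hh0 _; rewrite invf_le1 // lerDr.
apply: le_trans (leapfrog_increments (H := 1) _ ga q01 p0q0 _ iT jT kT) _.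
- by rewrite h_gt0.
- rewrite a1 powRr1 ?(le_trans ler01) // -/c ler_piMl ?(le_trans ler01) //.
  by move: hh0; rewrite -div1r ler_pdivlMr //; lra.
by rewrite ler_wpM2r ?powR_ge0 // ler_wpM2r ?(ltW h_gt0) // lerDl.
Qed.

End leapfrog_increments.

Unset Implicit Arguments.

Theorem lemma13 (R : realType) (d : nat) (m : R) (U : 'rV[R]_d -> R) :
  1 < m <= 2 ->
  C3 U ->
  (exists A1 : R, 0 <= A1 /\
     forall q : 'rV[R]_d,
       opnorm2_le U q (A1 * (enorm q + 1) `^ (m - 2)) /\
       opnorm3_le U q (A1 * (enorm q + 1) `^ (m - 3))) ->
  forall (T : nat) (gamma : R), (0 < T)%N -> 0 < gamma < m - 1 ->
  (m < 2 ->
   forall h0 : R, 0 < h0 ->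
   exists kappa R0 : R, 0 < kappa /\ 0 <= R0 /\
     forall h : R, 0 < h <= h0 ->
     forall q0 p0 : 'rV[R]_d,
       enorm p0 <= enorm q0 `^ gamma -> R0 <= enorm q0 ->
       forall i j k : nat, (1 <= i <= T)%N -> (1 <= j <= T)%N -> (1 <= k <= T)%N ->
         enorm (Phiq U h i (q0, p0) - Phiq U h j (q0, p0))
           <= kappa * h * enorm (Phiq U h k (q0, p0)) `^ (m - 1))
  /\
  (m = 2 ->
   exists h0 kappa R0 : R, 0 < h0 /\ 0 < kappa /\ 0 <= R0 /\
     forall h : R, 0 < h <= h0 ->
     forall q0 p0 : 'rV[R]_d,
       enorm p0 <= enorm q0 `^ gamma -> R0 <= enorm q0 ->
       forall i j k : nat, (1 <= i <= T)%N -> (1 <= j <= T)%N -> (1 <= k <= T)%N ->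
         enorm (Phiq U h i (q0, p0) - Phiq U h j (q0, p0))
           <= kappa * h * enorm (Phiq U h k (q0, p0)) `^ (m - 1)).
Proof.
move=> /andP[m_gt1 m_le2] hC3 [A1 [A1_ge0 hA]] T gam _ /andP[_ gam_lt].
have a_gt0 : 0 < m - 1 by lra.
have a_le1 : m - 1 <= 1 by lra.
have [B B0 grad_le] : exists2 B, 0 <= B & forall q, `|grad U q| <= B * (`|q| + 1) `^ (m - 1).
  apply: grad_growth_C3 a_gt0 a_le1 A1_ge0 hC3 _ => q.
  by rewrite (_ : m - 1 - 1 = m - 2); [exact: (hA q).1 | ring].
have ga : gam <= m - 1 by lra.
split => [m_lt2 h0 h0_gt0 | m_eq2].
- by apply: (leapfrog_increments_sublinear a_gt0 a_le1 B0 grad_le) => //; lra.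
- by apply: (leapfrog_increments_linear a_gt0 a_le1 B0 grad_le) => //; lra.
Qed.
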